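(* Let $M\ge 2$ be an integer. Take all $M-1$ identifiers of one group (anchor position $g$) and one identifier from a different group (anchor position $g'\neq g$). Then the $M\times M$ integer matrix whose rows are the corresponding coefficient vectors $\big(2^{\,M-1-r_1},\dots,2^{\,M-1-r_M}\big)$ has rank $M$ (over $\mathbb{Q}$), i.e. the encoded packet from the different group is linearly independent of the encoded packets of the group.
   Context: A batch of $M$ data packets $c_1,\dots,c_M$ is encoded as follows: an encoded packet is specified by an identifier $(r_1,\dots,r_M)$ of nonnegative integers; each packet $c_m$ is padded with $r_m$ zero bits at its head (and zeros at its tail so all have equal length), which in ordinary integer arithmetic amounts to forming $2^{r_{\max}-r_m}c_m$ with $r_{\max}=\max_m r_m$, and the padded packets are XORed. The coefficient vector of the encoded packet is $(2^{r_{\max}-r_1},\dots,2^{r_{\max}-r_M})$, and ranks are computed in ordinary (rational) arithmetic. In the (first-round) construction, every identifier is a bijection $\{1,\dots,M\}\to\{0,1,\dots,M-1\}$ (so $r_{\max}=M-1$), and the identifiers are arranged into $M$ groups indexed by an anchor position $g\in\{1,\dots,M\}$: the group with anchor position $g$ consists of the $M-1$ identifiers with $r_g=0$ whose entries at the positions other than $g$, read in increasing order of position, form the cyclic right shifts by $k=0,1,\dots,M-2$ of $(1,2,\dots,M-1)$. For example, the group with anchor $1$ is $(0,1,2,\dots,M-1),(0,M-1,1,\dots,M-2),\dots,(0,2,3,\dots,M-1,1)$, and the group with anchor $2$ starts with $(1,0,2,3,\dots,M-1)$. *)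

(* Positions 1..M of the paper are 'I_M (0-indexed). *)
From mathcomp Require Import all_boot all_order all_algebra.
Set Implicit Arguments. Unset Strict Implicit. Unset Printing Implicit Defensive.
Import GRing.Theory Num.Theory.

Definition identifier (M : nat) := 'I_M -> nat.

(* The k-th identifier (k = 0..M-2) of the group with anchor position g:
   r_g = 0, and the entries at positions other than g, read in increasing
   order of position, form the cyclic right shift by k of (1,2,...,M-1). *)
Definition group_ident (M : nat) (g : 'I_M) (k : nat) : identifier M :=
  fun i => if i == g then 0%N
           else nth 0%N (rotr k (iota 1 M.-1)) (if (i < g)%N then val i else (val i).-1).

Definition rmax (M : nat) (r : identifier M) : nat := \max_(i < M) r i.

Definition coef_vec (M : nat) (r : identifier M) : 'rV[rat]_M :=
  \row_(i < M) (2%:R ^+ (rmax r - r i))%R.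

Definition test_matrix (M : nat) (g g' : 'I_M) (k' : nat) : 'M[rat]_M :=
  \matrix_(j < M) coef_vec (if (j < M.-1)%N then group_ident g j
                            else group_ident g' k').

From mathcomp Require Import all_boot all_order all_algebra.
From mathcomp Require Import zify ring lra.
Set Implicit Arguments. Unset Strict Implicit. Unset Printing Implicit Defensive.
Import Order.TTheory GRing.Theory Num.Theory.

(* Dividing the coefficient vector of an identifier r by 2^(r_max) leaves the
   weights (1/2)^(r_i), so the encoded packets are orthogonal to u iff the
   weighted sums sum_i (1/2)^(r_i) u_i vanish.  On the positions other than
   the anchor g, the identifiers of group g carry the cyclic shifts of
   (1, ..., n) with n = M - 1; subtracting twice the equation of shift k from
   the equation of shift k + 1 cancels all but one position and shows that
   u is constant, say c, off g, with u_g = ((1/2)^n - 1) c.  In the equation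
   of the identifier r from group g', the anchor g' alone contributes c, the
   remaining positions off g contribute a nonnegative multiple of c, and g
   contributes (1/2)^(r_g) ((1/2)^n - 1) c with r_g > 0, of modulus less
   than |c|; hence c = 0 and u = 0. *)

(* (j - k) mod n, for j < n and k <= n *)
Definition cycsub (n j k : nat) : nat := if (k <= j)%N then (j - k)%N else (j + n - k)%N.

Lemma cycsubnn n k : cycsub n k k = 0%N.
Proof. by rewrite /cycsub leqnn subnn. Qed.

Lemma cycsubS_diag n k : (k < n)%N -> cycsub n k k.+1 = n.-1.
Proof. by rewrite /cycsub => kn; case: ifP => kk; lia. Qed.

Lemma cycsubS_neq n j k : (j < n)%N -> (k < n)%N -> j <> k ->
  (cycsub n j k.+1).+1 = cycsub n j k.
Proof. by rewrite /cycsub => jn kn jk; case: ifP; case: ifP => H1 H2; lia. Qed.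

Lemma cycsubn n j : (j < n)%N -> cycsub n j n = cycsub n j 0.
Proof. by rewrite /cycsub leq0n subn0 => jn; case: ifP => H; lia. Qed.

Lemma nth_rotr_iota1 n k j : (k < n)%N -> (j < n)%N ->
  nth 0%N (rotr k (iota 1 n)) j = (cycsub n j k).+1.
Proof.
move=> kn jn; rewrite /rotr size_iota /rot nth_cat size_drop size_iota.
have -> : (n - (n - k) = k)%N by lia.
rewrite /cycsub; case: (leqP k j) => kj.
- by rewrite nth_take ?nth_iota; lia.
- by rewrite nth_drop nth_iota; lia.
Qed.

Lemma neq_liftP n (g g' : 'I_n.+1) : g != g' -> exists j, g' = lift g j.
Proof. by case: (unliftP g g') => [j ->|->]; [exists j | rewrite eqxx]. Qed.

Lemma group_ident_anchor M (g : 'I_M) k : group_ident g k g = 0%N.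
Proof. by rewrite /group_ident eqxx. Qed.

Lemma group_ident_lift n (g : 'I_n.+1) (j : 'I_n) k : (k < n)%N ->
  group_ident g k (lift g j) = (cycsub n j k).+1.
Proof.
move=> kn; rewrite /group_ident eq_sym (negbTE (neq_lift g j)) -nth_rotr_iota1 //.
by congr nth; rewrite /= /bump; case: (leqP g j) => gj /=; case: ifP => H; lia.
Qed.

Local Open Scope ring_scope.

Lemma mxrank_full_tr_inj (F : fieldType) n (A : 'M[F]_n) :
  (forall u : 'rV_n, u *m A^T = 0 -> u = 0) -> \rank A = n.
Proof. by move=> Ainj; rewrite -mxrank_tr; apply/eqP/inj_row_free. Qed.

Lemma coef_vec_mul_tr M (r : identifier M) (u : 'rV[rat]_M) :
  coef_vec r *m u^T = (2 ^+ rmax r * \sum_j 2^-1 ^+ r j * u 0 j)%:M.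
Proof.
apply/matrixP => i i'; rewrite !ord1 !mxE eqxx mulr1n mulr_sumr.
apply: eq_bigr => j _; rewrite !mxE exprVn mulrCA.
have le_r : (r j <= rmax r)%N by apply: (leq_bigmax (F := r)).
by rewrite -[in RHS](subnK le_r) exprD -mulrA mulrCA mulKf ?expf_neq0.
Qed.

Section CyclicSystem.

Variables (R : realFieldType) (n : nat).
Local Notation y := (2^-1 : R).

Definition cyc_form (c0 : R) (x : 'I_n -> R) (k : nat) : R :=
  c0 + \sum_(j < n) y ^+ (cycsub n j k).+1 * x j.

Lemma group_ident_weights (g : 'I_n.+1) k (v : 'I_n.+1 -> R) : (k < n)%N ->
  \sum_j y ^+ group_ident g k j * v j = cyc_form (v g) (fun j => v (lift g j)) k.
Proof.
move=> kn; rewrite (bigD1_ord g) //= group_ident_anchor expr0 mul1r.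
by congr (_ + _); apply: eq_bigr => j _; rewrite group_ident_lift.
Qed.

Lemma cyc_form_step c0 x (i : 'I_n) :
  cyc_form c0 x i.+1 - 2 * cyc_form c0 x i = - c0 + (y ^+ n - 1) * x i.
Proof.
have y2 : 2 * y = 1 by rewrite divff // pnatr_eq0.
rewrite /cyc_form mulrDr opprD addrACA mulr_sumr -sumrB (bigD1 i) //= big1.
  rewrite cycsubS_diag // cycsubnn prednK ?(leq_ltn_trans _ (ltn_ord i)) //.
  by rewrite expr1 mulrA y2 mul1r; ring.
move=> j /eqP ji; have jk : (j : nat) <> i by move=> /val_inj.
rewrite -(cycsubS_neq (ltn_ord j) (ltn_ord i) jk) (exprS y _.+1).
by rewrite !mulrA y2 mul1r subrr.
Qed.

Lemma cyc_form_eq0 c0 x : (forall k, (k < n)%N -> cyc_form c0 x k = 0) ->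
  forall i, (y ^+ n - 1) * x i = c0.
Proof.
move=> F0 i; have F0i := F0 i (ltn_ord i).
have F0Si : cyc_form c0 x i.+1 = 0.
  have [Sin|] := ltnP i.+1 n; first exact: F0.
  rewrite leq_eqVlt ltnNge ltn_ord orbF => /eqP <-.
  rewrite -(F0 0%N (leq_ltn_trans _ (ltn_ord i))) //.
  by congr (_ + _); apply: eq_bigr => j _; rewrite cycsubn.
by move: (cyc_form_step c0 x i); rewrite F0i F0Si; lra.
Qed.

Lemma weights_eq0_of_cyc (g g' : 'I_n.+1) (r : identifier n.+1) (v : 'I_n.+1 -> R) :
  g != g' -> r g' = 0%N -> (0 < r g)%N ->
  (forall j, (y ^+ n - 1) * v (lift g j) = v g) ->
  \sum_j y ^+ r j * v j = 0 -> forall i, v i = 0.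
Proof.
move=> gg' rg' rg vlift sum0.
have [j0 g'E] := neq_liftP gg'.
have y0 : 0 <= y by rewrite invr_ge0.
have y1 : y < 1 by rewrite invf_lt1 ?ltr1n.
have yn1 : y ^+ n < 1 by rewrite exprn_ilt1 // -lt0n (leq_ltn_trans _ (ltn_ord j0)).
set p := y ^+ n - 1; set c := v g / p.
have p0 : p != 0 by rewrite subr_eq0 lt_eqF.
have vc j : v (lift g j) = c by apply: (mulfI p0); rewrite vlift mulrC divfK.
have vg : v g = p * c by rewrite mulrC divfK.
set S := \sum_(j < n) y ^+ r (lift g j).
have S1 : 1 <= S.
  rewrite /S (bigD1 j0) //= -g'E rg' expr0 lerDl.
  by apply: sumr_ge0 => j _; apply: exprn_ge0.
have qp : 0 <= y ^+ r g * y ^+ n by rewrite mulr_ge0 ?exprn_ge0.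
have q1 : y ^+ r g < 1 by rewrite exprn_ilt1 // -lt0n.
have c0 : c = 0.
  move: sum0; rewrite (bigD1_ord g) //= vg.
  under eq_bigr do rewrite vc.
  rewrite -mulr_suml -/S mulrA -mulrDl /p mulrBr mulr1 => /eqP.
  by rewrite mulf_eq0 => /orP[/eqP|/eqP //]; lra.
by move=> i; case: (unliftP g i) => [j ->|->]; rewrite ?vc ?vg c0 ?mulr0.
Qed.

End CyclicSystem.

Theorem lemma2 (M : nat) (g g' : 'I_M) (k' : nat) :
  (2 <= M)%N -> g != g' -> (k' < M.-1)%N ->
  \rank (test_matrix g g' k') = M.
Proof.
case: M g g' => [|n] g g'; first by case: g.
move=> _ gg' /= k'n.
apply: mxrank_full_tr_inj => u Au.
have row_eq (i : 'I_n.+1) :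
    \sum_j 2^-1 ^+ (if (i < n)%N then group_ident g i else group_ident g' k') j * u 0 j = 0.
  have := congr1 (row i \o trmx) Au.
  rewrite /= trmx_mul trmxK row_mul rowK trmx0 row0 coef_vec_mul_tr.
  move=> /matrixP/(_ 0 0)/eqP; rewrite !mxE mulr1n.
  by rewrite mulf_eq0 expf_eq0 pnatr_eq0 andbF => /eqP.
have cyc k : (k < n)%N -> cyc_form (u 0 g) (fun j => u 0 (lift g j)) k = 0.
  move=> kn; rewrite -group_ident_weights //.
  by have := row_eq (inord k); rewrite inordK ?kn //; lia.
have g'g_pos : (0 < group_ident g' k' g)%N.
  have /neq_liftP[j ->] : g' != g by rewrite eq_sym.
  by rewrite group_ident_lift.
have := row_eq ord_max; rewrite ltnn => last_eq.
apply/rowP => i; rewrite mxE.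
exact: (weights_eq0_of_cyc gg' (group_ident_anchor g' k') g'g_pos
          (cyc_form_eq0 cyc) last_eq).
Qed.
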